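(* Let $X=\{1,\dots,n\}$, $Y$ finite, $Q$ a symmetric irreducible stochastic matrix on $Y$ (notation in context). Let $2\le k\le n$, let $\underline a$ be a type with $a_0+\cdots+a_m=k$, $A\subseteq X$ with $|A|=k$, and $F\in P_{k,\underline a,A}$. Then $$D^*_{k,\underline a}D_{k,\underline a}F=|Y|\,(k-\ell(\underline a))\,F+Q_kF.$$
   Context: $Q$ acts on $L(Y)$ by $(Qf)(y)=\sum_{y'}q(y,y')f(y')$, with distinct eigenvalues $\lambda_0=1,\dots,\lambda_m$ and eigenspaces $W_0$ (constants), $W_1,\dots,W_m$; $\sum_yf(y)=0$ for $f\in W_j$, $j\ge1$. $\Theta_k$: functions $\theta$ with $\mathrm{dom}(\theta)$ a $k$-subset of $X$ and values in $Y$; $\varphi\subseteq\theta$ means $\mathrm{dom}\varphi\subseteq\mathrm{dom}\theta$ and $\theta|_{\mathrm{dom}\varphi}=\varphi$. $D_k:L(\Theta_k)\to L(\Theta_{k-1})$, $(D_kF)(\varphi)=\sum_{\theta\supseteq\varphi}F(\theta)$; $D_k^*:L(\Theta_{k-1})\to L(\Theta_k)$, $(D_k^*F)(\theta)=\sum_{\varphi\subseteq\theta}F(\varphi)$. Types $\underline a=(a_0,\dots,a_m)$, $\ell(\underline a)=a_1+\cdots+a_m$, $\underline a'=(a_0-1,a_1,\dots,a_m)$. A fundamental function of type $\underline a$ on a $k$-set $A$ is $F=\bigotimes_{j\in A}F^j$ ($F(\theta)=\prod_{j\in A}F^j(\theta(j))$ on $Y^A$, $0$ elsewhere) with each $F^j$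 in some $W_{i_j}$ and exactly $a_i$ indices $j$ with $i_j=i$; $P_{k,\underline a,A}$ is their span and $P_{k,\underline a}=\bigoplus_AP_{k,\underline a,A}$ ($=\{0\}$ if a type entry is negative). $D_{k,\underline a}$ is the restriction of $D_k$ to $P_{k,\underline a}$ (with values in $P_{k-1,\underline a'}$) and $D^*_{k,\underline a}$ the restriction of $D^*_k$ to $P_{k-1,\underline a'}$. The operator $Q_k$ on $L(\Theta_k)$ is defined on a fundamental function $F=\bigotimes_{j\in A}F^j$ and extended linearly: for $\theta\in\Theta_k$ with $|\mathrm{dom}\theta\cap A|=k-1$, $A\setminus\mathrm{dom}\theta=\{i\}$, $\mathrm{dom}\theta\setminus A=\{i_0\}$, set $(Q_kF)(\theta)=|Y|F(\bar\theta)$ if $F^i\in W_0$ and $(Q_kF)(\theta)=0$ if $F^i\notin W_0$, where $\bar\theta\in Y^A$ agrees with $\theta$ on $A\setminus\{i\}$ and $\bar\theta(i)=\theta(i_0)$; for all other $\theta$, $(Q_kF)(\theta)=0$. *)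

From HB Require Import structures.
From mathcomp Require Import all_boot all_order all_algebra.
Set Implicit Arguments. Unset Strict Implicit. Unset Printing Implicit Defensive.
Import Order.TTheory GRing.Theory Num.Theory.
Local Open Scope ring_scope.

Section Defs.
Variable R : realFieldType.
Variable Y : finType.

Definition Qop (q : Y -> Y -> R) (f : Y -> R) : Y -> R :=
  fun y => \sum_(y' : Y) q y y' * f y'.

Definition symmetric_stochastic_irreducible (q : Y -> Y -> R) : Prop :=
  [/\ forall y y', q y y' = q y' y,
      forall y y', 0 <= q y y',
      forall y, \sum_(y' : Y) q y y' = 1 &
      forall y y', connect (fun u v => 0 < q u v) y y'].

Definition is_eigenvalue (q : Y -> Y -> R) (l : R) : Prop :=
  exists f : Y -> R, (exists y, f y != 0) /\ forall y, Qop q f y = l * f y.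

Definition eigen_enum (q : Y -> Y -> R) (m : nat) (lam : 'I_m.+1 -> R) : Prop :=
  [/\ lam ord0 = 1, injective lam,
      forall i, is_eigenvalue q (lam i) &
      forall l, is_eigenvalue q l -> exists i, lam i = l].

Definition inW (q : Y -> Y -> R) m (lam : 'I_m.+1 -> R) (i : 'I_m.+1) (f : Y -> R) : bool :=
  [forall y, Qop q f y == lam i * f y].

Variable n : nat.
Definition pfun := {ffun 'I_n -> option Y}.
Definition dom (t : pfun) : {set 'I_n} := [set j | t j != None].
Definition psub (phi t : pfun) : bool :=
  [forall j, (phi j == None) || (phi j == t j)].

(* D_k : L(Theta_k) -> L(Theta_{k-1}) and D_k^* : L(Theta_{k-1}) -> L(Theta_k);
   functions on Theta_j are represented as functions on all partial functions,
   only their values on Theta_j matter. *)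
Definition Dk (k : nat) (F : pfun -> R) : pfun -> R :=
  fun phi => \sum_(t : pfun | (#|dom t| == k) && psub phi t) F t.
Definition Dkstar (k : nat) (G : pfun -> R) : pfun -> R :=
  fun t => \sum_(phi : pfun | (#|dom phi| == k.-1) && psub phi t) G phi.

Definition evalj (Fj : 'I_n -> Y -> R) (t : pfun) (j : 'I_n) : R :=
  match t j with Some y => Fj j y | None => 0 end.

Definition fund (A : {set 'I_n}) (Fj : 'I_n -> Y -> R) (t : pfun) : R :=
  if dom t == A then \prod_(j in A) evalj Fj t j else 0.

Definition fund_data (q : Y -> Y -> R) m (lam : 'I_m.+1 -> R)
    (a : 'I_m.+1 -> nat) (A : {set 'I_n})
    (idx : 'I_n -> 'I_m.+1) (Fj : 'I_n -> Y -> R) : Prop :=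
  (forall j, j \in A -> inW q lam (idx j) (Fj j)) /\
  (forall i, #|[set j in A | idx j == i]| = a i).

Definition ell m (a : 'I_m.+1 -> nat) : nat := (\sum_(i < m.+1 | i != ord0) a i)%N.

Definition Qk (q : Y -> Y -> R) m (lam : 'I_m.+1 -> R) (k : nat)
    (A : {set 'I_n}) (Fj : 'I_n -> Y -> R) (t : pfun) : R :=
  if #|dom t :&: A| == k.-1 then
    match [pick i in A :\: dom t], [pick i0 in dom t :\: A] with
    | Some i, Some i0 =>
        if inW q lam ord0 (Fj i) then
          let tbar : pfun :=
            [ffun j => if j == i then t i0 else if j \in A then t j else None] in
          #|Y|%:R * fund A Fj tbar
        else 0
    | _, _ => 0
    end
  else 0.

End Defs.

(* On a fundamental function F = (x)_{j in A} F^j, the composite D^* D removes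
   one coordinate of theta and sums F over all ways of filling it back in.  The
   sum over the refilled value y of F^i(y) is |Y| F^i(.) when F^i lies in W_0
   (harmonic, hence constant by irreducibility) and vanishes otherwise, since a
   symmetric stochastic Q preserves the sum of an eigenfunction while its
   eigenvalue differs from 1.  If dom theta = A
   each of the a_0 constant factors contributes |Y| F(theta); if dom theta and A
   differ in one point, the only surviving term is the one moving theta(i0) to
   the missing coordinate i, which is Q_k F(theta); otherwise nothing survives. *)

From HB Require Import structures.
From mathcomp Require Import all_boot all_order all_algebra zify ring.
Set Implicit Arguments. Unset Strict Implicit. Unset Printing Implicit Defensive.
Import Order.TTheory GRing.Theory Num.Theory.
Local Open Scope ring_scope.

Lemma setD_swap_setU1 (T : finType) (A B : {set T}) (i i0 : T) :
  B :\: A = [set i0] -> A :\: B = [set i] -> A = i |: (B :\ i0).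
Proof.
move=> /setP BA /setP AB; apply/setP => x; have := BA x; have := AB x.
rewrite !inE.
by case: (x \in A); case: (x \in B); case: (x == i); case: (x == i0).
Qed.

Section PartialFunctions.
Variables (R : realFieldType) (Y : finType) (n : nat).
Implicit Types (t phi : pfun Y n) (Fj : 'I_n -> Y -> R) (A : {set 'I_n}).

Definition pfun_upd t i (o : option Y) : pfun Y n :=
  [ffun j => if j == i then o else t j].

Lemma dom_upd_Some t i y : dom (pfun_upd t i (Some y)) = i |: dom t.
Proof. by apply/setP=> j; rewrite !inE ffunE; case: (j == i). Qed.

Lemma dom_upd_None t i : dom (pfun_upd t i None) = dom t :\ i.
Proof. by apply/setP=> j; rewrite !inE ffunE; case: (j == i). Qed.

Lemma psub_dom {phi t : pfun Y n} : psub phi t -> dom phi \subset dom t.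
Proof.
move=> /forallP ps; apply/subsetP => j; rewrite !inE.
by case/orP: (ps j) => /eqP ->.
Qed.

Lemma psub_upd_None t i : psub (pfun_upd t i None) t.
Proof. by apply/forallP => j; rewrite ffunE; case: (j == i); rewrite eqxx ?orbT. Qed.

Lemma fund_upd_None Fj t j : j \in dom t ->
  fund (dom t) Fj t = evalj Fj t j * fund (dom t :\ j) Fj (pfun_upd t j None).
Proof.
move=> jt; rewrite /fund dom_upd_None !eqxx (bigD1 j jt) /=; congr (_ * _).
apply: eq_big => [x|x /andP[_ xj]]; first by rewrite in_setD1 andbC.
by rewrite /evalj ffunE (negbTE xj).
Qed.

Lemma Dk_fund Fj phi i A : i \notin dom phi -> A = i |: dom phi ->
  Dk #|A| (fund A Fj) phi = fund (dom phi) Fj phi * \sum_y Fj i y.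
Proof.
move=> iphi defA; have iA : i \in A by rewrite defA setU11.
case: (pickP (@predT Y)) => [y0 _|Y0]; last first.
  rewrite [\sum_y _]big1 ?mulr0 => [|y _]; last by have := Y0 y.
  apply: big1 => t _; rewrite /fund; case: eqP => // dA.
  by move: iA; rewrite -dA inE; case: (t i) => // y; have := Y0 y.
rewrite /Dk (bigID (fun t => dom t == A)) /= [X in _ + X]big1 ?addr0; last first.
  by move=> t /andP[_ /negbTE dA]; rewrite /fund dA.
rewrite (reindex_onto (pfun_upd phi i \o Some) (fun t => odflt y0 (t i))); last first.
  move=> t /andP[/andP[_ /forallP ps] /eqP dA]; apply/ffunP => j; rewrite ffunE.
  case: eqP => [->|ji]; first by move: iA; rewrite -dA inE; case: (t i).
  case/orP: (ps j) => [/eqP pj | /eqP //]; rewrite pj.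
  have : j \notin dom t by rewrite dA defA !inE (introF eqP ji) /= pj.
  by rewrite inE negbK => /eqP ->.
rewrite mulr_sumr; apply: eq_big => [y | y _] /=.
  rewrite dom_upd_Some -defA ffunE !eqxx /= !andbT; apply/forallP => j.
  rewrite ffunE; case: (j =P i) => [->|_]; last by rewrite eqxx orbT.
  by move: iphi; rewrite inE negbK => ->.
have := @fund_upd_None Fj (pfun_upd phi i (Some y)) i.
rewrite dom_upd_Some setU11 -defA => /(_ isT) ->; rewrite mulrC /evalj ffunE eqxx.
congr (_ * _); rewrite defA setU1K //; congr fund; apply/ffunP => j; rewrite !ffunE.
by case: (j =P i) => // ->; move: iphi; rewrite inE negbK => /eqP.
Qed.

Lemma Dk_fund_eq0 k A Fj phi : ~~ (dom phi \subset A) -> Dk k (fund A Fj) phi = 0.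
Proof.
move=> nsub; apply: big1 => t /andP[_ ps]; rewrite /fund; case: eqP => // dA.
by move: nsub; rewrite -dA psub_dom.
Qed.

Lemma Dkstar_eq_sum_upd (G : pfun Y n -> R) t : (0 < #|dom t|)%N ->
  Dkstar #|dom t| G t = \sum_(j in dom t) G (pfun_upd t j None).
Proof.
move=> t_gt0; have /set0Pn [j0 _] : dom t != set0 by rewrite -card_gt0.
rewrite /Dkstar (reindex_onto (pfun_upd t ^~ None)
  (fun phi => odflt j0 [pick x in dom t :\: dom phi])); last first.
  move=> phi /andP[/eqP cphi ps]; have sub := psub_dom ps.
  have /cards1P [x defx] : #|dom t :\: dom phi| == 1%N.
    by rewrite cardsD (setIidPr sub) cphi; apply/eqP; lia.
  rewrite defx pick_set1 /=.
  have : x \in dom t :\: dom phi by rewrite defx set11.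
  rewrite !inE negbK => /andP[/eqP phix _]; apply/ffunP => y; rewrite ffunE.
  case: eqP => [->//|yx]; case/orP: (forallP ps y) => [/eqP phiy | /eqP //].
  rewrite phiy; case ty: (t y) => //.
  have : y \in dom t :\: dom phi by rewrite !inE phiy ty.
  by rewrite defx inE => /eqP.
apply: eq_bigl => j; rewrite psub_upd_None dom_upd_None andbT.
case: (boolP (j \in dom t)) => jt; last first.
  have := cardsD1 j (dom t); rewrite (negbTE jt) add0n => cardD1.
  move: t_gt0; rewrite cardD1; case: #|_| => // c _.
  by rewrite /= eqn_leq ltnn.
have -> : dom t :\: (dom t :\ j) = [set j].
  apply/setP => x; rewrite !inE; case: (x =P j) => [->|_] /=; last by rewrite andNb.
  by move: jt; rewrite inE.
by rewrite pick_set1 /= eqxx (cardsD1 j (dom t)) jt add1n /= eqxx.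
Qed.

Lemma Dk_lincomb k (N : nat) (c : 'I_N -> R) (G : 'I_N -> pfun Y n -> R) phi :
  Dk k (fun t => \sum_s c s * G s t) phi = \sum_s c s * Dk k (G s) phi.
Proof. by rewrite /Dk exchange_big; apply: eq_bigr => s _; rewrite mulr_sumr. Qed.

Lemma Dkstar_lincomb k (N : nat) (c : 'I_N -> R) (G : pfun Y n -> R)
    (H : 'I_N -> pfun Y n -> R) t :
  (forall phi, G phi = \sum_s c s * H s phi) ->
  Dkstar k G t = \sum_s c s * Dkstar k (H s) t.
Proof.
move=> defG; rewrite /Dkstar (eq_bigr _ (fun phi _ => defG phi)) exchange_big.
by apply: eq_bigr => s _; rewrite mulr_sumr.
Qed.

End PartialFunctions.

Section Spectral.
Variables (R : realFieldType) (Y : finType) (q : Y -> Y -> R).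
Hypothesis hq : symmetric_stochastic_irreducible q.

(* Maximum principle: f is constant on the Q-connected class of an argmax. *)
Lemma Qop_fixed_const f : (forall y, Qop q f y = f y) -> forall y y', f y = f y'.
Proof.
case: hq => sym pos row conn fixf y y'.
have [z _ zmax] := @arg_maxP _ R _ y xpredT f isT.
have step u v : 0 < q u v -> f u = f z -> f v = f z.
  move=> quv fu; have gap_eq0 : \sum_w q u w * (f z - f w) = 0.
    under eq_bigr do rewrite mulrBr.
    by rewrite sumrB -mulr_suml row mul1r -[X in _ - X]/(Qop q f u) fixf fu subrr.
  have gap_ge0 w : true -> 0 <= q u w * (f z - f w).
    by move=> _; rewrite mulr_ge0 ?pos // subr_ge0; apply: zmax.
  have /eqP := psumr_eq0P gap_ge0 gap_eq0 (i := v) isT.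
  by rewrite mulf_eq0 (gt_eqF quv) /= subr_eq0 => /eqP ->.
have cl : closed (fun u v => 0 < q u v) [pred x | f x == f z].
  move=> u v quv; rewrite !inE; apply/eqP/eqP; first exact: step.
  by apply: step; rewrite sym.
have := closed_connect cl (conn z y); have := closed_connect cl (conn z y').
by rewrite !inE eqxx => /esym/eqP -> /esym/eqP ->.
Qed.

Lemma sum_eigenfunction_eq0 l f :
  l != 1 -> (forall y, Qop q f y = l * f y) -> \sum_y f y = 0.
Proof.
case: hq => sym _ row _ l1 eigf.
have sumQ : \sum_y Qop q f y = \sum_y f y.
  rewrite /Qop exchange_big; apply: eq_bigr => y' _.
  by rewrite -mulr_suml (eq_bigr _ (fun y _ => sym y y')) row mul1r.
have : (l - 1) * \sum_y f y = 0.
  by rewrite mulrBl mul1r mulr_sumr -sumQ -sumrB big1 // => y _; rewrite eigf subrr.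
by move/eqP; rewrite mulf_eq0 subr_eq0 (negbTE l1) => /eqP.
Qed.

Variables (m : nat) (lam : 'I_m.+1 -> R).
Hypothesis hlam : eigen_enum q lam.

Lemma sum_W0 f y0 : inW q lam ord0 f -> \sum_y f y = #|Y|%:R * f y0.
Proof.
case: hlam => lam0 _ _ _ /forallP W0f.
have fixf y : Qop q f y = f y by rewrite (eqP (W0f y)) lam0 mul1r.
by rewrite (eq_bigr _ (fun y _ => Qop_fixed_const fixf y y0)) sumr_const mulr_natl.
Qed.

Lemma sum_W_eq0 i f : i != ord0 -> inW q lam i f -> \sum_y f y = 0.
Proof.
case: hlam => lam0 lam_inj _ _ i0 /forallP Wf.
apply: (@sum_eigenfunction_eq0 (lam i)) => [|y]; last exact/eqP.
by rewrite -lam0 (inj_eq lam_inj).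
Qed.

End Spectral.

Section FundamentalFunction.
Variables (R : realFieldType) (Y : finType) (n : nat) (q : Y -> Y -> R).
Hypothesis hq : symmetric_stochastic_irreducible q.
Variables (m : nat) (lam : 'I_m.+1 -> R).
Hypothesis hlam : eigen_enum q lam.
Variables (a : 'I_m.+1 -> nat) (A : {set 'I_n}).
Variables (idx : 'I_n -> 'I_m.+1) (Fj : 'I_n -> Y -> R).
Hypothesis hfd : fund_data q lam a A idx Fj.
Hypothesis A_gt0 : (0 < #|A|)%N.

Let DDF := Dkstar #|A| (Dk #|A| (fund A Fj)).

Lemma Dkstar_Dk_fund_dom_eq t : dom t = A -> DDF t = #|Y|%:R * (a ord0)%:R * fund A Fj t.
Proof.
move=> dA; case: hfd => W_idx card_idx; rewrite /DDF -{1}dA Dkstar_eq_sum_upd ?dA //.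
transitivity (\sum_(j in A) if idx j == ord0 then #|Y|%:R * fund A Fj t else 0).
  apply: eq_bigr => j jA; have jt : j \in dom t by rewrite dA.
  rewrite (@Dk_fund _ _ _ _ _ j) ?dom_upd_None ?setD11 ?setD1K ?dA //.
  have [yj tj] : exists y, t j = Some y by move: jt; rewrite inE; case: (t j) => // y; exists y.
  have [idx0|idxN0] := eqVneq (idx j) ord0; last first.
    by rewrite (sum_W_eq0 hq hlam idxN0 (W_idx j jA)) mulr0.
  have W0 := W_idx j jA; rewrite idx0 in W0.
  rewrite (sum_W0 hq hlam yj W0) -dA (fund_upd_None _ jt) /evalj tj; ring.
rewrite -big_mkcondr sumr_const.
rewrite (eq_card (B := [set j in A | idx j == ord0])) => [|j]; last by rewrite inE.
by rewrite card_idx; ring.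
Qed.

Lemma Dkstar_Dk_fund_adjacent t :
  #|dom t| = #|A| -> #|dom t :&: A| = #|A|.-1 -> DDF t = Qk q lam #|A| A Fj t.
Proof.
move=> ht hI; case: hfd => W_idx _.
have /cards1P [i0 tA] : #|dom t :\: A| == 1%N by rewrite cardsD hI ht; apply/eqP; lia.
have /cards1P [i At] : #|A :\: dom t| == 1%N by rewrite cardsD setIC hI; apply/eqP; lia.
have defA := setD_swap_setU1 tA At.
have /setDP [i0t i0A] : i0 \in dom t :\: A by rewrite tA set11.
have /setDP [iA it] : i \in A :\: dom t by rewrite At set11.
have [yi0 ti0] : exists y, t i0 = Some y.
  by move: i0t; rewrite inE; case: (t i0) => // y; exists y.
rewrite /DDF -{1}ht Dkstar_eq_sum_upd ?ht // (bigD1 i0 i0t) /= big1 => [|j /andP[_ ji0]]; last first.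
  apply: Dk_fund_eq0; apply: contra i0A => /subsetP; apply.
  by rewrite dom_upd_None in_setD1 eq_sym ji0.
rewrite addr0 (@Dk_fund _ _ _ _ _ i) ?dom_upd_None; first last.
- exact: defA.
- by rewrite in_setD1 (negbTE it) andbF.
rewrite /Qk hI eqxx tA At !pick_set1.
have [W0|WN0] := boolP (inW q lam ord0 (Fj i)); last first.
  have idxN0 : idx i != ord0 by apply: contraNneq WN0 => <-; apply: W_idx.
  by rewrite (sum_W_eq0 hq hlam idxN0 (W_idx i iA)) mulr0.
rewrite (sum_W0 hq hlam yi0 W0).
set tb := [ffun j => _].
have in_A x : x != i -> x != i0 -> (x \in A) = (x \in dom t).
  by move=> xi xi0; rewrite defA !inE (negbTE xi) xi0.
have dom_tb : dom tb = A.
  apply/setP => x; rewrite inE ffunE; have [->|xi] := eqVneq x i; first by rewrite ti0 iA.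
  have [->|xi0] := eqVneq x i0; first by rewrite (negbTE i0A).
  by rewrite in_A // inE; case: (t x).
have tb_upd : pfun_upd tb i None = pfun_upd t i0 None.
  apply/ffunP => x; rewrite !ffunE; have [->|xi] := eqVneq x i.
    by case: eqP => // _; move: it; rewrite inE negbK => /eqP ->.
  have [->|xi0] := eqVneq x i0; first by rewrite (negbTE i0A).
  by rewrite in_A // inE; case: (t x).
have := @fund_upd_None _ _ _ Fj tb i; rewrite dom_tb iA tb_upd => /(_ isT) ->.
rewrite defA setU1K ?dom_upd_None; last by rewrite in_setD1 (negbTE it) andbF.
by rewrite /evalj ffunE eqxx ti0; ring.
Qed.

Lemma Dkstar_Dk_fund_far t : #|dom t| = #|A| -> dom t != A -> #|dom t :&: A| != #|A|.-1 ->
  DDF t = 0.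
Proof.
move=> ht tA hI; rewrite /DDF -{1}ht Dkstar_eq_sum_upd ?ht //.
apply: big1 => j jt; apply: Dk_fund_eq0; rewrite dom_upd_None.
apply: contra hI => sub.
have jA : j \notin A.
  apply: contra tA => jA; rewrite eqEcard ht leqnn andbT; apply/subsetP => x xt.
  have [->//|xj] := eqVneq x j.
  by apply: (subsetP sub); rewrite in_setD1 xj xt.
have -> : dom t :&: A = dom t :\ j.
  apply/setP => x; rewrite in_setI in_setD1.
  have [->|xj] := eqVneq x j; first by rewrite (negbTE jA) andbF.
  apply/andP/idP => [[]//|xt]; split=> //.
  by apply: (subsetP sub); rewrite in_setD1 xj xt.
by rewrite -ht (cardsD1 j (dom t)) jt.
Qed.

Lemma Dkstar_Dk_fund t : #|dom t| = #|A| ->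
  DDF t = #|Y|%:R * (a ord0)%:R * fund A Fj t + Qk q lam #|A| A Fj t.
Proof.
move=> ht; have [dA|tA] := eqVneq (dom t) A.
  rewrite Dkstar_Dk_fund_dom_eq // /Qk dA setIid.
  by case: ifP => [/eqP|]; [lia | rewrite addr0].
rewrite /fund (negbTE tA) mulr0 add0r.
have [hI|hI] := eqVneq #|dom t :&: A| #|A|.-1; first exact: Dkstar_Dk_fund_adjacent.
by rewrite Dkstar_Dk_fund_far // /Qk (negbTE hI).
Qed.

End FundamentalFunction.

Theorem lemma7p4 (R : realFieldType) (Y : finType) (n : nat)
    (q : Y -> Y -> R) (m : nat) (lam : 'I_m.+1 -> R)
    (k : nat) (a : 'I_m.+1 -> nat) (A : {set 'I_n})
    (N : nat) (c : 'I_N -> R) (idx : 'I_N -> 'I_n -> 'I_m.+1)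
    (Fs : 'I_N -> 'I_n -> Y -> R) :
  symmetric_stochastic_irreducible q ->
  eigen_enum q lam ->
  (2 <= k <= n)%N ->
  (\sum_(i < m.+1) a i)%N = k ->
  #|A| = k ->
  (forall s, fund_data q lam a A (idx s) (Fs s)) ->
  let F := fun t : pfun Y n => \sum_(s < N) c s * fund A (Fs s) t in
  forall t : pfun Y n, #|dom t| = k ->
    Dkstar k (Dk k F) t
    = #|Y|%:R * (k%:R - (ell a)%:R) * F t
      + \sum_(s < N) c s * Qk q lam k A (Fs s) t.
Proof.
move=> hq hlam /andP[k_ge2 _] sum_a cardA hfd F t ht.
rewrite -{}cardA in k_ge2 sum_a ht *.
have A_gt0 : (0 < #|A|)%N by lia.
have a0 : (#|A|%:R - (ell a)%:R : R) = (a ord0)%:R.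
  by rewrite /ell -sum_a (bigD1 ord0) //= natrD addrK.
rewrite (Dkstar_lincomb _ _ (fun phi => Dk_lincomb _ _ _ phi)) a0 /F mulr_sumr -big_split.
apply: eq_bigr => s _; rewrite (Dkstar_Dk_fund hq hlam (hfd s) A_gt0 ht) /=; ring.
Qed.
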